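(* Let $\mathfrak{g}$ be a Lie algebra with two stratifications $$V_1\oplus\dots\oplus V_s=\mathfrak{g}=W_1\oplus\dots\oplus W_t.$$ Then $s=t$ and there exists a Lie algebra automorphism $A:\mathfrak{g}\to\mathfrak{g}$ such that $A(V_i)=W_i$ for all $i\in\{1,\dots,s\}$.
   Context: All Lie algebras are finite-dimensional over $\mathbb R$. For subspaces $V,W$ of a Lie algebra, $[V,W]:=\operatorname{span}\{[X,Y]: X\in V, Y\in W\}$. A stratification of a Lie algebra $\mathfrak{g}$ is a direct-sum decomposition $\mathfrak{g}=V_1\oplus\dots\oplus V_s$ for some integer $s\ge1$ with $V_s\neq\{0\}$ and $[V_1,V_j]=V_{j+1}$ for all $j\in\{1,\dots,s\}$, where $V_{s+1}:=\{0\}$. *)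

From HB Require Import structures.
From mathcomp Require Import all_boot all_order all_algebra.
Set Implicit Arguments. Unset Strict Implicit. Unset Printing Implicit Defensive.
Import GRing.Theory.
Local Open Scope ring_scope.

Definition is_lie_bracket (F : fieldType) (L : vectType F) (br : L -> L -> L) : Prop :=
  [/\ (forall (a : F) (x y z : L), br (a *: x + y) z = a *: br x z + br y z),
      (forall (a : F) (x y z : L), br x (a *: y + z) = a *: br x y + br x z),
      (forall x : L, br x x = 0) &
      (forall x y z : L, br x (br y z) + br y (br z x) + br z (br x y) = 0)].

Definition is_bracket_span (F : fieldType) (L : vectType F) (br : L -> L -> L)
    (U W Z : {vspace L}) : Prop :=
  (forall x y, x \in U -> y \in W -> br x y \in Z) /\
  (forall Z' : {vspace L},
      (forall x y, x \in U -> y \in W -> br x y \in Z') -> (Z <= Z')%VS).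

(* V 1 (+) ... (+) V s is a stratification of (L, br); indices 1..s are used,
   other values of V are irrelevant; V (s+1) := 0. *)
Definition stratification (F : fieldType) (L : vectType F) (br : L -> L -> L)
    (s : nat) (V : nat -> {vspace L}) : Prop :=
  [/\ (1 <= s)%N,
      (\sum_(1 <= i < s.+1) V i)%VS = fullv,
      directv (\sum_(1 <= i < s.+1) V i)%VS,
      V s != 0%VS &
      (forall j, (1 <= j <= s)%N ->
         is_bracket_span br (V 1%N) (V j) (if (j < s)%N then V j.+1 else 0%VS))].

Definition lie_automorphism (F : fieldType) (L : vectType F) (br : L -> L -> L)
    (A : 'End(L)) : Prop :=
  lker A = 0%VS /\ (forall x y : L, A (br x y) = br (A x) (A y)).

From HB Require Import structures.
From mathcomp Require Import all_boot all_order all_algebra.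
From mathcomp Require Import zify.
Local Open Scope ring_scope.
Import GRing.Theory.
Set Implicit Arguments. Unset Strict Implicit.

(* The tails V_k + ... + V_s of a stratification are the terms of the lower
   central series (g^(1) = g, g^(k+1) = [g, g^(k)]), so they depend only on the
   Lie algebra; comparing where they vanish gives s = t.  Since V_i and W_i are
   both complements of g^(i+1) in g^(i), the map A sending x in V_i to its
   W_i-component satisfies x - A x \in g^(i+1), and the symmetric map is its
   inverse.  For x in V_i and y in V_j, the brackets [x, y] and [A x, A y] lie in
   V_(i+j) and W_(i+j) and differ by an element of g^(i+j+1), hence
   A [x, y] = [A x, A y]. *)

Section Bracket.
Variables (F : fieldType) (L : vectType F) (br : L -> L -> L).
Hypothesis Hbr : is_lie_bracket br.

Lemma brDl x y z : br (x + y) z = br x z + br y z.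
Proof. by case: Hbr => H _ _ _; have := H 1 x y z; rewrite !scale1r. Qed.

Lemma brDr x y z : br z (x + y) = br z x + br z y.
Proof. by case: Hbr => _ H _ _; have := H 1 z x y; rewrite !scale1r. Qed.

Lemma br0l z : br 0 z = 0.
Proof. by apply/(addrI (br 0 z)); rewrite -brDl !addr0. Qed.

Lemma br0r z : br z 0 = 0.
Proof. by apply/(addrI (br z 0)); rewrite -brDr !addr0. Qed.

Lemma brZl a x z : br (a *: x) z = a *: br x z.
Proof. by case: Hbr => H _ _ _; rewrite -[a *: x]addr0 H br0l addr0. Qed.

Lemma brZr a x z : br z (a *: x) = a *: br z x.
Proof. by case: Hbr => _ H _ _; rewrite -[a *: x]addr0 H br0r addr0. Qed.

Lemma brC x y : br x y = - br y x.
Proof.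
case: Hbr => _ _ H _; have := H (x + y).
by rewrite brDl !brDr !H add0r addr0 => /eqP; rewrite addr_eq0 => /eqP.
Qed.

Lemma brNr x y : br y (- x) = - br y x.
Proof. by rewrite -scaleN1r brZr scaleN1r. Qed.

Lemma br_suml I (r : seq I) (P : pred I) (f : I -> L) z :
  br (\sum_(i <- r | P i) f i) z = \sum_(i <- r | P i) br (f i) z.
Proof. by elim/big_rec2: _ => [|i a b _ <-]; rewrite ?br0l ?brDl. Qed.

Lemma br_sumr I (r : seq I) (P : pred I) (f : I -> L) z :
  br z (\sum_(i <- r | P i) f i) = \sum_(i <- r | P i) br z (f i).
Proof. by elim/big_rec2: _ => [|i a b _ <-]; rewrite ?br0r ?brDr. Qed.

Lemma br_jacobil a b y : br (br a b) y = br a (br b y) + br b (br y a).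
Proof.
case: Hbr => _ _ _ J; have := J a b y.
by rewrite [br y (br a b)]brC => /eqP; rewrite subr_eq0 => /eqP.
Qed.

End Bracket.

Section SpanInduction.
Variables (F : fieldType) (L : vectType F).

Definition lin_closed (P : L -> Prop) :=
  P 0 /\ (forall a u v, P u -> P v -> P (a *: u + v)).

Lemma lin_closed_vspace (U : {vspace L}) : lin_closed (fun v => v \in U).
Proof. by split=> [|a u v Uu Uv]; rewrite ?mem0v ?memvD ?memvZ. Qed.

Lemma span_ind (P : L -> Prop) (X : seq L) : lin_closed P ->
  (forall x, x \in X -> P x) -> forall v, v \in <<X>>%VS -> P v.
Proof.
move=> [P0 PL] PX v /(coord_span (X := in_tuple X)) ->.
apply: big_ind => // [u w Pu Pw|i _]; first by rewrite -[u]scale1r; apply: PL.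
by rewrite -[_ *: _]addr0; apply: PL => //; apply/PX/mem_nth.
Qed.

Lemma sumv_nat_ind (P : L -> Prop) m n (Vs : nat -> {vspace L}) : lin_closed P ->
  (forall i v, (m <= i < n)%N -> v \in Vs i -> P v) ->
  forall v, v \in (\sum_(m <= i < n) Vs i)%VS -> P v.
Proof.
move=> [P0 PL] PV; rewrite big_nat_cond.
apply: (big_ind (fun U : {vspace L} => forall v, v \in U -> P v)).
- by move=> v; rewrite memv0 => /eqP ->.
- move=> U1 U2 PU1 PU2 v /memv_addP [u Uu [w Uw ->]].
  by rewrite -[u]scale1r; apply: PL; [apply: PU1 | apply: PU2].
- by move=> i /andP [Hi _] v; apply: PV.
Qed.

Lemma directv_nat_independent (Vs : nat -> {vspace L}) s :
  directv (\sum_(1 <= i < s.+1) Vs i) ->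
  forall vs : nat -> L, (forall i, (1 <= i <= s)%N -> vs i \in Vs i) ->
  \sum_(1 <= i < s.+1) vs i = 0 -> forall i, (1 <= i <= s)%N -> vs i = 0.
Proof.
move=> dxV; have /directv_sum_independent {}dxV : directv (\sum_(i < s) Vs i.+1).
  by move: dxV; rewrite !directvE /= !big_add1 !big_mkord.
move=> vs Vvs; rewrite big_add1 big_mkord => vs0 [|i] // /andP [_ ltis].
exact: (dxV (fun i : 'I_s => vs i.+1) (fun j _ => Vvs j.+1 (ltn_ord j)) vs0 (Ordinal ltis)).
Qed.

Variable br : L -> L -> L.
Hypothesis Hbr : is_lie_bracket br.

Lemma bracket_span_ind U W Z (P : L -> Prop) : is_bracket_span br U W Z ->
  lin_closed P -> (forall x y, x \in U -> y \in W -> P (br x y)) ->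
  forall z, z \in Z -> P z.
Proof.
move=> [_ minZ] PC Pbr z.
have sub_span : (Z <= <<allpairs br (vbasis U) (vbasis W)>>)%VS.
  apply: minZ => x y /coord_vbasis -> /coord_vbasis ->.
  rewrite (br_suml Hbr); apply: rpred_sum => i _; rewrite (brZl Hbr) (br_sumr Hbr).
  apply/rpredZ/rpred_sum => j _; rewrite (brZr Hbr); apply/rpredZ/memv_span.
  by apply: allpairs_f; apply: mem_nth; rewrite size_tuple.
move/(subvP sub_span); apply: span_ind => // w /allpairsP [[x y] [/= Ux Wy ->]].
by apply: Pbr; apply: vbasis_mem.
Qed.

Lemma bracket_span_uniq U W Z1 Z2 : is_bracket_span br U W Z1 ->
  is_bracket_span br U W Z2 -> Z1 = Z2.
Proof. by move=> [H1 M1] [H2 M2]; apply/eqP; rewrite eqEsubv (M1 _ H2) (M2 _ H1). Qed.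

End SpanInduction.

Section Grading.
Variables (F : fieldType) (L : vectType F) (s : nat) (V : nat -> {vspace L}).

Definition tail k := (\sum_(k <= i < s.+1) V i)%VS.

Definition stratum k := if (1 <= k <= s)%N then V k else 0%VS.

Lemma stratum_id k : (1 <= k <= s)%N -> stratum k = V k.
Proof. by rewrite /stratum => ->. Qed.

Lemma stratum_out k : ~~ (1 <= k <= s)%N -> stratum k = 0%VS.
Proof. by rewrite /stratum => /negPf ->. Qed.

Lemma tail_out k : (s < k)%N -> tail k = 0%VS.
Proof. by move=> ltsk; rewrite /tail big_geq. Qed.

Lemma sub_tail i k : (k <= i <= s)%N -> (V i <= tail k)%VS.
Proof.
case/andP=> leki leis; rewrite /tail (@big_cat_nat _ _ _ i) ?(@big_ltn _ _ _ i) //.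
  exact: subv_trans (addvSl (V i) _) (addvSr _ _).
exact: leqW.
Qed.

Lemma stratum_sub_tail i k : (k <= i)%N -> (stratum i <= tail k)%VS.
Proof.
move=> leki; rewrite /stratum; case: ifP => [/andP [_ leis]|_]; last exact: sub0v.
by apply: sub_tail; rewrite leki.
Qed.

Lemma tail_mono p q : (q <= p)%N -> (tail p <= tail q)%VS.
Proof.
move=> leqp; apply/subvP; apply: sumv_nat_ind; first exact: lin_closed_vspace.
by move=> i v /andP [lepi leis]; apply/subvP/sub_tail; rewrite (leq_trans leqp).
Qed.

Hypothesis Vfull : (\sum_(1 <= i < s.+1) V i)%VS = fullv.
Hypothesis Vdirect : directv (\sum_(1 <= i < s.+1) V i)%VS.

Lemma tail1 : tail 1 = fullv.
Proof. exact: Vfull. Qed.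

Definition proj i := sumv_pi_for (esym Vfull) i.

Lemma proj_mem i v : proj i v \in V i.
Proof. exact: memv_sum_pi. Qed.

Lemma proj_sum v : \sum_(1 <= i < s.+1) proj i v = v.
Proof. by rewrite -[RHS](sumv_pi_nat_sum (esym Vfull)) ?memvf // big_mkcond. Qed.

Lemma proj_uniq (vs : nat -> L) v : (forall i, (1 <= i <= s)%N -> vs i \in V i) ->
  v = \sum_(1 <= i < s.+1) vs i -> forall j, (1 <= j <= s)%N -> proj j v = vs j.
Proof.
move=> Vvs ->{v} j Hj; apply/eqP; rewrite -subr_eq0; apply/eqP.
apply: (directv_nat_independent Vdirect (vs := fun i => proj i _ - vs i)) => //.
  by move=> i Hi; rewrite memvB ?proj_mem ?Vvs.
by rewrite sumrB proj_sum subrr.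
Qed.

Lemma sum_delta i (x : L) : (1 <= i <= s)%N ->
  \sum_(1 <= j < s.+1) (if j == i then x else 0) = x.
Proof. by move=> Hi; rewrite -big_mkcond big_nat1_eq ltnS Hi. Qed.

Lemma proj_id i j v : (1 <= i <= s)%N -> (1 <= j <= s)%N -> v \in V i ->
  proj j v = if j == i then v else 0.
Proof.
move=> Hi Hj Vv; apply: (proj_uniq (vs := fun k => if k == i then v else 0)) => //.
  by move=> k _; case: eqP => [->|_] //; exact: mem0v.
by rewrite sum_delta.
Qed.

Lemma proj_tail k j v : (1 <= j < k)%N -> v \in tail k -> proj j v = 0.
Proof.
move=> /andP [Hj1 Hjk]; move: v; apply: sumv_nat_ind.
  split=> [|a u w Pu Pw]; first exact: linear0.
  by rewrite linearP /= Pu Pw scaler0 addr0.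
move=> i v /andP [leki leis] Vv.
have [Hi Hj] : (1 <= i <= s)%N /\ (1 <= j <= s)%N by lia.
by rewrite (proj_id Hi Hj Vv); case: eqP => // eqji; lia.
Qed.

Lemma proj_tail_diff k v : (1 <= k <= s)%N -> v \in tail k -> v - proj k v \in tail k.+1.
Proof.
move=> Hk; move: v; apply: sumv_nat_ind.
  split=> [|a u w Tu Tw]; first by rewrite linear0 subrr mem0v.
  rewrite linearP /= opprD addrACA -scalerBr.
  exact: (proj2 (lin_closed_vspace _)).
move=> i v /andP [leki leis] Vv.
have Hi : (1 <= i <= s)%N by lia.
rewrite (proj_id Hi Hk Vv); case: eqP => [_|/eqP neki]; first by rewrite subrr mem0v.
by rewrite subr0; apply: (subvP (sub_tail _)) Vv; lia.
Qed.

End Grading.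

Section Stratification.
Variables (F : fieldType) (L : vectType F) (br : L -> L -> L).
Hypothesis Hbr : is_lie_bracket br.
Variables (s : nat) (V : nat -> {vspace L}).
Hypothesis HV : stratification br s V.

Lemma stratification_full : (\sum_(1 <= i < s.+1) V i)%VS = fullv.
Proof. by case: HV. Qed.

Lemma stratification_direct : directv (\sum_(1 <= i < s.+1) V i)%VS.
Proof. by case: HV. Qed.

Lemma stratum_bracket_span j : (1 <= j <= s)%N ->
  is_bracket_span br (V 1) (V j) (stratum s V j.+1).
Proof.
case: HV => _ _ _ _ spanV Hj; move: (spanV j Hj); rewrite /stratum.
by case/andP: Hj => _; rewrite leq_eqVlt => /orP [/eqP ->|->].
Qed.

Lemma br_V1_stratum j x y : x \in V 1 -> y \in stratum s V j ->
  br x y \in stratum s V j.+1.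
Proof.
move=> V1x; case Hj: (1 <= j <= s)%N.
  by rewrite stratum_id // => Vy; case: (stratum_bracket_span Hj) => + _; apply.
by rewrite stratum_out ?Hj // memv0 => /eqP ->; rewrite (br0r Hbr) mem0v.
Qed.

(* Induction on [i], writing elements of [V_(i+1)] as sums of brackets [a, b]
   with [a] in [V_1], [b] in [V_i], and expanding [[[a, b], y]] by Jacobi. *)
Lemma br_stratum i j x y : x \in stratum s V i -> y \in stratum s V j ->
  br x y \in stratum s V (i + j).
Proof.
elim: i j x y => [|i IH] j x y.
  by rewrite stratum_out // memv0 => /eqP ->; rewrite (br0l Hbr) mem0v.
case Hi: (1 <= i.+1 <= s)%N; last first.
  by rewrite stratum_out ?Hi // memv0 => /eqP ->; rewrite (br0l Hbr) mem0v.
rewrite [stratum s V i.+1]stratum_id ?Hi //; case: i IH Hi => [|i] IH Hi.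
  by move=> V1x; rewrite add1n; apply: br_V1_stratum.
have Hi' : (1 <= i.+1 <= s)%N by lia.
have spanV := stratum_bracket_span Hi'; rewrite stratum_id ?Hi // in spanV.
move=> Vx; move: j y; pattern x; apply: (bracket_span_ind Hbr spanV) Vx.
  split=> [j y _|a u v Pu Pv j y Vy]; first by rewrite (br0l Hbr) mem0v.
  by rewrite (brDl Hbr) (brZl Hbr) memvD ?memvZ ?Pu ?Pv.
move=> a b V1a Vb j y Vy; rewrite (br_jacobil Hbr) memvD //.
  by rewrite addSn; apply: br_V1_stratum => //; apply: IH Vy; rewrite stratum_id.
rewrite [br y a](brC Hbr) (brNr Hbr) memvN addSnnS.
by apply: IH; [rewrite stratum_id | apply: br_V1_stratum].
Qed.

Lemma br_tail p q x y : (1 <= p)%N -> (1 <= q)%N ->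
  x \in tail s V p -> y \in tail s V q -> br x y \in tail s V (p + q).
Proof.
move=> Hp Hq Tx; move: x Tx y; apply: sumv_nat_ind.
  split=> [y _|a u v Pu Pv y Ty]; first by rewrite (br0l Hbr) mem0v.
  by rewrite (brDl Hbr) (brZl Hbr) memvD ?memvZ ?Pu ?Pv.
move=> i x /andP [lepi ltis] Vx; apply: sumv_nat_ind.
  split=> [|a u v Pu Pv]; first by rewrite (br0r Hbr) mem0v.
  by rewrite (brDr Hbr) (brZr Hbr) memvD ?memvZ ?Pu ?Pv.
move=> j y /andP [leqj ltjs] Vy.
apply: (subvP (stratum_sub_tail _ _ (leq_add lepi leqj))).
by apply: br_stratum; rewrite stratum_id //; lia.
Qed.

Lemma tail_lower_central k : (1 <= k)%N ->
  is_bracket_span br fullv (tail s V k) (tail s V k.+1).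
Proof.
move=> Hk; split.
  move=> x y _ Ty; rewrite -add1n; apply: br_tail => //.
  by rewrite (tail1 stratification_full) memvf.
move=> Z brZ; apply/subvP; apply: sumv_nat_ind; first exact: lin_closed_vspace.
move=> [|i] v /andP [leki leis] Vv //.
have Hi : (1 <= i <= s)%N by lia.
case: (stratum_bracket_span Hi) => _; rewrite stratum_id; last lia.
move=> minV; apply: (subvP (minV Z _)) Vv => x y _ Vy; apply: brZ; first exact: memvf.
by apply: (subvP (sub_tail V _)) Vy; lia.
Qed.

End Stratification.

Lemma stratification_tail_uniq (F : fieldType) (L : vectType F) (br : L -> L -> L)
    (s t : nat) (V W : nat -> {vspace L}) :
  is_lie_bracket br -> stratification br s V -> stratification br t W ->
  forall k, (1 <= k)%N -> tail s V k = tail t W k.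
Proof.
move=> Hbr HV HW; elim=> [//|[|k] IH] _.
  by rewrite (tail1 (stratification_full HV)) (tail1 (stratification_full HW)).
have := tail_lower_central Hbr HV (ltn0Sn k); rewrite IH // => spanV.
exact: bracket_span_uniq spanV (tail_lower_central Hbr HW _).
Qed.

Lemma stratification_length_le (F : fieldType) (L : vectType F) (br : L -> L -> L)
    (s t : nat) (V W : nat -> {vspace L}) :
  is_lie_bracket br -> stratification br s V -> stratification br t W -> (t <= s)%N.
Proof.
move=> Hbr HV HW; rewrite leqNgt; apply/negP => ltst.
case: (HW) => t_gt0 _ _ Wt_neq0 _.
have := @sub_tail _ _ t W t t; rewrite leqnn => /(_ erefl).
rewrite -(stratification_tail_uniq Hbr HV HW t_gt0) tail_out // subv0.
by apply/negP.
Qed.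

Section StratIsoMap.
Variables (F : fieldType) (L : vectType F) (br : L -> L -> L).
Variables (s : nat) (V W : nat -> {vspace L}).
Hypotheses (HV : stratification br s V) (HW : stratification br s W).

Let projV := proj (stratification_full HV).
Let projW := proj (stratification_full HW).

Definition strat_iso : 'End(L) := \sum_(1 <= i < s.+1) (projW i \o projV i)%VF.

Lemma strat_iso_V i v : (1 <= i <= s)%N -> v \in V i -> strat_iso v = projW i v.
Proof.
move=> Hi Vv; rewrite sum_lfunE -(sum_delta (projW i v) Hi).
apply: eq_big_seq => j; rewrite mem_index_iota comp_lfunE => Hj.
have Hj' : (1 <= j <= s)%N by lia.
rewrite (proj_id _ (stratification_direct HV) Hi Hj' Vv).
by case: eqP => [->|_] //; rewrite linear0.
Qed.

Lemma strat_iso_mem i v : (1 <= i <= s)%N -> v \in V i -> strat_iso v \in W i.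
Proof. by move=> Hi Vv; rewrite (strat_iso_V Hi Vv) proj_mem. Qed.

End StratIsoMap.

Section StratIso.
Variables (F : fieldType) (L : vectType F) (br : L -> L -> L).
Hypothesis Hbr : is_lie_bracket br.
Variables (s : nat) (V W : nat -> {vspace L}).
Hypotheses (HV : stratification br s V) (HW : stratification br s W).
Hypothesis eq_tail : forall k, (1 <= k)%N -> tail s V k = tail s W k.

Let A := strat_iso HV HW.

Lemma strat_iso_sub_tail i v : (1 <= i <= s)%N -> v \in V i ->
  v - A v \in tail s V i.+1.
Proof.
move=> Hi Vv; rewrite /A (strat_iso_V _ _ Hi Vv) eq_tail //.
apply: (proj_tail_diff _ (stratification_direct HW)) => //; rewrite -eq_tail; last lia.
by apply: (subvP (sub_tail V _)) Vv; lia.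
Qed.

Lemma strat_iso_br_sub_tail i j x y : (1 <= i <= s)%N -> (1 <= j <= s)%N ->
  x \in V i -> y \in V j -> br x y - br (A x) (A y) \in tail s V (i + j).+1.
Proof.
move=> Hi Hj Vx Vy.
set a := x - A x; set b := y - A y.
have Ta : a \in tail s V i.+1 by apply: strat_iso_sub_tail.
have Tb : b \in tail s V j.+1 by apply: strat_iso_sub_tail.
have TA k z : (1 <= k <= s)%N -> z \in V k -> A z \in tail s V k.
  move=> Hk Vz; rewrite eq_tail; last lia.
  by apply: (subvP (sub_tail W _)) (strat_iso_mem _ _ Hk Vz); lia.
have -> : br x y - br (A x) (A y) = br (A x) b + br a (A y) + br a b.
  have Ex : x = A x + a by rewrite addrC subrK.
  have Ey : y = A y + b by rewrite addrC subrK.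
  clearbody a b.
  by rewrite {1}Ex {1}Ey (brDl Hbr) !(brDr Hbr) addrC addrA addKr addrA.
rewrite !memvD //.
- by rewrite -addnS; apply: (br_tail Hbr HV) => //; [lia | apply: TA].
- by rewrite -addSn; apply: (br_tail Hbr HV) => //; [lia | apply: TA].
have : (tail s V (i.+1 + j.+1) <= tail s V (i + j).+1)%VS by apply: tail_mono; lia.
by move/subvP; apply; apply: (br_tail Hbr HV) => //; lia.
Qed.

Lemma strat_iso_br_homogeneous i j x y : (1 <= i <= s)%N -> (1 <= j <= s)%N ->
  x \in V i -> y \in V j -> A (br x y) = br (A x) (A y).
Proof.
move=> Hi Hj Vx Vy; have Txy := strat_iso_br_sub_tail Hi Hj Vx Vy.
have SAxy : br (A x) (A y) \in stratum s W (i + j).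
  by apply: (br_stratum Hbr HW); rewrite stratum_id ?strat_iso_mem.
have Sxy : br x y \in stratum s V (i + j) by apply: (br_stratum Hbr HV); rewrite stratum_id.
have [Hij|/stratum_out Sij] := boolP (1 <= i + j <= s)%N; last first.
  move: Sxy SAxy; rewrite !Sij !memv0 => /eqP -> /eqP ->; exact: linear0.
rewrite stratum_id // in Sxy; rewrite stratum_id // in SAxy.
have Hij' : (1 <= i + j < (i + j).+1)%N by lia.
rewrite /A (strat_iso_V _ _ Hij Sxy) -[br x y](subrK (br (A x) (A y))) linearD /=.
rewrite (proj_id _ (stratification_direct HW) Hij Hij SAxy) eqxx.
by rewrite (proj_tail _ (stratification_direct HW) Hij') -?eq_tail ?add0r //; lia.
Qed.

Lemma strat_iso_br x y : A (br x y) = br (A x) (A y).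
Proof.
have sumV := proj_sum (stratification_full HV).
rewrite -[x]sumV -[y]sumV !linear_sum (br_suml Hbr) (br_suml Hbr) linear_sum.
apply: eq_big_seq => i; rewrite mem_index_iota => Hi.
rewrite (br_sumr Hbr) (br_sumr Hbr) linear_sum; apply: eq_big_seq => j.
by rewrite mem_index_iota => Hj; apply: (@strat_iso_br_homogeneous i j); rewrite ?proj_mem; lia.
Qed.

(* On [V_i], [A] is the projection to [W_i] along [tail W (i+1)] and
   [strat_iso HW HV] the projection back to [V_i] along [tail V (i+1)], which is
   the same subspace. *)
Lemma strat_isoK_homogeneous i v : (1 <= i <= s)%N -> v \in V i ->
  strat_iso HW HV (A v) = v.
Proof.
move=> Hi Vv; have WAv : A v \in W i by apply: strat_iso_mem.
rewrite (strat_iso_V HW HV Hi WAv) -[A v](subKr v) linearB /=.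
rewrite (proj_id _ (stratification_direct HV) Hi Hi Vv) eqxx.
have Hii : (1 <= i < i.+1)%N by lia.
by rewrite (proj_tail _ (stratification_direct HV) Hii) ?subr0 ?strat_iso_sub_tail.
Qed.

Lemma strat_isoK : cancel A (strat_iso HW HV).
Proof.
move=> v; have sumV := proj_sum (stratification_full HV).
rewrite -[v]sumV !linear_sum; apply: eq_big_seq => i; rewrite mem_index_iota => Hi.
by apply: (@strat_isoK_homogeneous i); [lia | apply: proj_mem].
Qed.

End StratIso.

Theorem mainTheorem2 (F : realFieldType) (L : vectType F) (br : L -> L -> L)
    (s t : nat) (V W : nat -> {vspace L}) :
  is_lie_bracket br ->
  stratification br s V ->
  stratification br t W ->
  s = t /\
  exists A : 'End(L),
    lie_automorphism br A /\
    (forall i, (1 <= i <= s)%N -> (A @: V i)%VS = W i).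
Proof.
move=> Hbr HV HW.
have est : s = t.
  by apply/eqP; rewrite eqn_leq (stratification_length_le Hbr HW HV)
                                (stratification_length_le Hbr HV HW).
split=> //; subst t.
have eq_tailVW := stratification_tail_uniq Hbr HV HW.
have eq_tailWV := stratification_tail_uniq Hbr HW HV.
exists (strat_iso HV HW); split; first split.
- exact/eqP/lker0P/(can_inj (strat_isoK HV HW eq_tailVW)).
- by move=> x y; rewrite (strat_iso_br Hbr HV HW eq_tailVW).
move=> i Hi; apply/eqP; rewrite eqEsubv; apply/andP; split.
  by apply/subvP => w /memv_imgP [v Vv ->]; apply: strat_iso_mem.
apply/subvP => w Ww; rewrite -(strat_isoK HW HV eq_tailWV w); apply: memv_img.
exact: strat_iso_mem.
Qed.
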